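(* Let $n\ge d\ge1$ and suppose $P\subseteq\mathbb{R}^d$ is a grid set of size $\binom{n}{d}$. Then for every compact convex set $C\subseteq\mathbb{R}^d$, \[ |\partial C\cap P|\le 2\binom{n}{d-1}. \]
   Context: A set $P\subseteq\mathbb{R}^d$ of size $\binom{n}{d}$ is a grid set if there exist $n$ hyperplanes in $\mathbb{R}^d$ such that $P$ is exactly the set of points obtained as intersections of $d$ of these hyperplanes (each $d$-subset of the hyperplanes meeting in a single point, these points being distinct). $\partial C$ denotes the boundary of $C$ in $\mathbb{R}^d$. *)

From HB Require Import structures.
From mathcomp Require Import all_boot all_order all_algebra.
From mathcomp Require Import all_classical all_reals all_analysis.
Set Implicit Arguments. Unset Strict Implicit. Unset Printing Implicit Defensive.
Import Order.TTheory GRing.Theory Num.Theory numFieldNormedType.Exports.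
Local Open Scope classical_set_scope.
Local Open Scope ring_scope.

Definition dotv (R : realType) (d : nat) (u v : 'rV[R]_d) : R :=
  \sum_(i < d) u ord0 i * v ord0 i.

Definition on_hyperplane (R : realType) (d : nat) (a : 'rV[R]_d) (b : R)
  (x : 'rV[R]_d) : Prop := dotv a x = b.

(* P is a grid set for n hyperplanes {x | <a i, x> = b i} (a i <> 0):
   every d-subset S of the hyperplanes meets in exactly one point, the points
   for distinct d-subsets are distinct, and P is exactly the set of these
   points.  (Hence #P = 'C(n, d).) *)
Definition grid_set (R : realType) (d n : nat) (P : set 'rV[R]_d) : Prop :=
  exists (a : 'I_n -> 'rV[R]_d) (b : 'I_n -> R),
    [/\ (forall i, a i != 0),
        (forall S : {set 'I_n}, #|S| = d ->
           exists! x, forall i, i \in S -> on_hyperplane (a i) (b i) x),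
        (forall (S T : {set 'I_n}) x, #|S| = d -> #|T| = d ->
           (forall i, i \in S -> on_hyperplane (a i) (b i) x) ->
           (forall i, i \in T -> on_hyperplane (a i) (b i) x) -> S = T) &
        P = [set x | exists S : {set 'I_n}, #|S| = d /\
               (forall i, i \in S -> on_hyperplane (a i) (b i) x)]].

Definition convex (R : realType) (d : nat) (C : set 'rV[R]_d) : Prop :=
  forall x y (t : R), C x -> C y -> 0 <= t -> t <= 1 ->
    C (t *: x + (1 - t) *: y).

Definition bdry (R : realType) (d : nat) (C : set 'rV[R]_d) : set 'rV[R]_d :=
  closure C `\` interior C.

(* A boundary point p of C lying in P is the intersection of d hyperplanes of
   the arrangement, indexed by S.  Dropping one index i leaves a line through p.
   If C extended on both sides of p along each of these d lines, the d segments
   would span a neighbourhood of p by convexity, so p would be interior.  Hence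
   p is an end point of C on some line, labelled by the (d-1)-set S minus i.  A
   convex set meets a line in a segment, which has at most two end points, so
   each of the binom(n, d-1) labels is used at most twice. *)
From HB Require Import structures.
From mathcomp Require Import all_boot all_order all_algebra.
From mathcomp Require Import all_classical all_reals all_analysis.
From mathcomp Require Import ring lra.
Set Implicit Arguments.
Unset Strict Implicit.
Unset Printing Implicit Defensive.
Import Order.TTheory GRing.Theory Num.Theory numFieldNormedType.Exports.
Local Open Scope classical_set_scope.
Local Open Scope ring_scope.

Lemma size_le_fibers (X : eqType) (Y : finType) (f : X -> Y) (D : {pred Y})
    (k : nat) (s : seq X) :
  {in s, forall x, f x \in D} ->
  (forall y, count (fun x => f x == y) s <= k)%N ->
  (size s <= k * #|D|)%N.
Proof.
move=> fD fibers.
have -> : size s = (\sum_(y in D) count (fun x => f x == y) s)%N.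
  rewrite -sum1_size (eq_big_seq (fun x => \sum_(y in D) (f x == y) : nat)).
    rewrite exchange_big; apply: eq_bigr => y _.
    by rewrite -big_mkcond sum1_count.
  move=> x xs; rewrite (bigD1 (f x)) ?fD //= eqxx big1 // => y /andP[_].
  by rewrite eq_sym => /negbTE ->.
by rewrite mulnC -sum_nat_const leq_sum.
Qed.

Section DotProduct.
Variables (R : realType) (d : nat).
Implicit Types (a u v : 'rV[R]_d) (c : R).

Lemma dotvDr a u v : dotv a (u + v) = dotv a u + dotv a v.
Proof.
by rewrite /dotv -big_split; apply: eq_bigr => i _; rewrite mxE mulrDr.
Qed.

Lemma dotvZr a c u : dotv a (c *: u) = c * dotv a u.
Proof. by rewrite /dotv mulr_sumr; apply: eq_bigr => i _; rewrite mxE mulrCA. Qed.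

Lemma dotvZl a c u : dotv (c *: a) u = c * dotv a u.
Proof. by rewrite /dotv mulr_sumr; apply: eq_bigr => i _; rewrite mxE mulrA. Qed.

Lemma dotvBr a u v : dotv a (u - v) = dotv a u - dotv a v.
Proof. by rewrite dotvDr -scaleN1r dotvZr mulN1r. Qed.

Lemma dotv_sumr a (I : finType) (S : {pred I}) (F : I -> 'rV[R]_d) :
  dotv a (\sum_(i in S) F i) = \sum_(i in S) dotv a (F i).
Proof.
by rewrite /dotv exchange_big; apply: eq_bigr => k _; rewrite summxE mulr_sumr.
Qed.

Lemma normr_entry_le v k : `|v ord0 k| <= `|v|.
Proof.
rewrite [X in _ <= X]/Num.norm /= mx_normrE.
exact: (le_bigmax _ (fun ij : 'I_1 * 'I_d => `|v ij.1 ij.2|) (ord0, k)).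
Qed.

Lemma dotv_bound a v : `|dotv a v| <= (\sum_k `|a ord0 k|) * `|v|.
Proof.
rewrite /dotv mulr_suml; apply: le_trans (ler_norm_sum _ _ _) _.
by apply: ler_sum => k _; rewrite normrM ler_wpM2l ?normr_entry_le.
Qed.

End DotProduct.

Section ConvexSets.
Variables (R : realType) (d : nat) (C : set 'rV[R]_d).
Hypothesis convC : convex C.

Definition two_sided (p w : 'rV[R]_d) := C (p + w) /\ C (p - w).

Lemma convex_ray q w (al m : R) :
  C q -> C (q + al *: w) -> 0 < al -> 0 <= m <= al -> C (q + m *: w).
Proof.
move=> Cq Cqw al0 /andP[m0 mal].
have := convC Cqw Cq (divr_ge0 m0 (ltW al0)).
rewrite ler_pdivrMr // mul1r => /(_ mal).
by congr C; apply/rowP => k; rewrite !mxE; field; rewrite gt_eqF.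
Qed.

Lemma two_sided_shrink q w (al be : R) :
  C q -> C (q + al *: w) -> C (q - be *: w) -> 0 < al -> 0 < be ->
  two_sided q (Num.min al be *: w).
Proof.
move=> Cq Cal Cbe al0 be0.
have min_ge0 : 0 <= Num.min al be by rewrite le_min !ltW.
split; first by apply: convex_ray Cq Cal al0 _; rewrite min_ge0 ge_min lexx.
rewrite -scalerN; apply: convex_ray Cq _ be0 _; first by rewrite scalerN.
by rewrite min_ge0 ge_min lexx orbT.
Qed.

Lemma two_sided_segment p w (t : R) :
  two_sided p w -> `|t| <= 1 -> C (p + t *: w).
Proof.
move=> [Cpw Cmw]; rewrite ler_norml => /andP[tge tle].
have ge0 : 0 <= (1 + t) / 2 by rewrite divr_ge0 //; lra.
have le1 : (1 + t) / 2 <= 1 by rewrite ler_pdivrMr // mul1r; lra.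
have := convC Cpw Cmw ge0 le1.
by congr C; apply/rowP => k; rewrite !mxE; field.
Qed.

Lemma convex_mean (r : seq 'rV[R]_d) :
  r != [::] -> {in r, forall x, C x} -> C ((size r)%:R^-1 *: \sum_(x <- r) x).
Proof.
elim: r => [//|x [|y r] IH] _ Cr.
  by rewrite big_seq1 /= invr1 scale1r; apply: Cr; rewrite mem_head.
have Cx : C x by apply: Cr; rewrite mem_head.
have CS : C ((size (y :: r))%:R^-1 *: \sum_(z <- y :: r) z).
  by apply: IH => // z zr; apply: Cr; rewrite inE zr orbT.
rewrite big_cons (_ : size _ = (size (y :: r)).+1) //.
have : (0 < size (y :: r))%N by [].
move: (size (y :: r)) (\sum_(z <- y :: r) z) CS => k S CS k0.
have t0 : 0 <= k.+1%:R^-1 :> R by rewrite invr_ge0.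
have t1 : k.+1%:R^-1 <= 1 :> R by rewrite invf_le1 ?ler1n.
have kR : k%:R != 0 :> R by rewrite pnatr_eq0 -lt0n.
have k1R : k%:R + 1 != 0 :> R by rewrite natr1 pnatr_eq0.
have := convC Cx CS t0 t1.
by congr C; apply/rowP => j; rewrite !mxE -natr1; field; rewrite k1R kR.
Qed.

Lemma convex_mean_set (I : finType) (S : {set I}) (x : I -> 'rV[R]_d) :
  (0 < #|S|)%N -> {in S, forall i, C (x i)} ->
  C (#|S|%:R^-1 *: \sum_(i in S) x i).
Proof.
move=> S0 CS; have := @convex_mean (map x (enum S)).
rewrite size_map -cardE big_map big_enum; apply.
  by rewrite -size_eq0 size_map -cardE -lt0n.
by move=> z /mapP[i]; rewrite mem_enum => iS ->; apply: CS.
Qed.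

Lemma convex_nbhs_of_two_sided (I : finType) (S : {set I}) p
    (W : I -> 'rV[R]_d) (c : I -> 'rV[R]_d -> R) (M : I -> R) :
  (0 < #|S|)%N -> {in S, forall i, two_sided p (W i)} ->
  (forall i, 0 <= M i) -> (forall i v, `|c i v| <= M i * `|v|) ->
  (forall v, v = \sum_(i in S) c i v *: W i) -> nbhs p C.
Proof.
move=> S0 two_sidedW M0 cM decomp.
pose N : R := #|S|%:R; pose K := \sum_(i in S) M i.
have N0 : N != 0 by rewrite pnatr_eq0 -lt0n.
have N_ge0 : 0 <= N by rewrite ler0n.
have K0 : 0 <= K by rewrite sumr_ge0.
have MK i : i \in S -> M i <= K.
  by move=> iS; rewrite /K (bigD1 i) //= lerDl sumr_ge0.
apply/nbhs_ballP; exists (1 + N * K)^-1 => /=.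
  by rewrite invr_gt0 ltr_pwDl // mulr_ge0.
move=> z; rewrite -ball_normE /= => pz; pose v := z - p.
have v_small : `|v| * (1 + N * K) < 1.
  by rewrite -ltr_pdivlMr ?mul1r ?ltr_pwDl ?mulr_ge0 // /v -normrN opprB.
have t_le1 i : i \in S -> `|N * c i v| <= 1.
  move=> iS; rewrite normrM ger0_norm //.
  apply: (@le_trans _ _ (N * (K * `|v|))).
    by rewrite ler_wpM2l // (le_trans (cM i v)) // ler_wpM2r ?MK.
  by have := normr_ge0 v; nra.
have Csegments : {in S, forall i, C (p + (N * c i v) *: W i)}.
  by move=> i iS; apply: two_sided_segment (two_sidedW i iS) (t_le1 i iS).
suff -> : z = N^-1 *: \sum_(i in S) (p + (N * c i v) *: W i).
  exact: convex_mean_set.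
rewrite big_split /= sumr_const -scaler_nat -/N.
under eq_bigr do rewrite -scalerA.
by rewrite -scaler_sumr -decomp -scalerDr scalerA mulVf // scale1r addrC subrK.
Qed.

Lemma convex_collinear_two_sided x u (rho : R) :
  C x -> C (x + u) -> C (x + rho *: u) -> rho != 0 -> rho != 1 ->
  exists2 c, 0 < c & [\/ two_sided x (c *: u), two_sided (x + u) (c *: u)
                        | two_sided (x + rho *: u) (c *: u)].
Proof.
move=> Cx Cy Cz rho0 rho1.
have min_gt0 (al be : R) : 0 < al -> 0 < be -> 0 < Num.min al be.
  by move=> al0 be0; rewrite lt_min al0.
have [rho_lt0|rho_gt0|/eqP] := ltrgtP rho 0; last by rewrite (negbTE rho0).
  have be0 : 0 < - rho by rewrite oppr_gt0.
  exists (Num.min 1 (- rho)); first exact: min_gt0.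
  apply: Or31; apply: two_sided_shrink Cx _ _ ltr01 be0.
    by rewrite scale1r.
  by rewrite scaleNr opprK.
have [rho_lt1|rho_gt1|/eqP] := ltrgtP rho 1; last by rewrite (negbTE rho1).
  have al0 : 0 < 1 - rho by rewrite subr_gt0.
  exists (Num.min (1 - rho) rho); first exact: min_gt0.
  apply: Or33; apply: two_sided_shrink Cz _ _ al0 rho_gt0.
    by move: Cy; congr C; apply/rowP => k; rewrite !mxE; ring.
  by move: Cx; congr C; apply/rowP => k; rewrite !mxE; ring.
have al0 : 0 < rho - 1 by rewrite subr_gt0.
exists (Num.min (rho - 1) 1); first exact: min_gt0.
apply: Or32; apply: two_sided_shrink Cy _ _ al0 ltr01.
  by move: Cz; congr C; apply/rowP => k; rewrite !mxE; ring.
by move: Cx; congr C; apply/rowP => k; rewrite !mxE; ring.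
Qed.

End ConvexSets.

Section HyperplaneArrangement.
Variables (R : realType) (d n : nat) (a : 'I_n -> 'rV[R]_d) (b : 'I_n -> R).
Implicit Types (S T : {set 'I_n}) (p u v w x y : 'rV[R]_d).

Definition flat S x := forall i, i \in S -> on_hyperplane (a i) (b i) x.

Definition flat_dir S u := forall i, i \in S -> dotv (a i) u = 0.

Definition flat_dim_le1 S :=
  forall u v, flat_dir S u -> flat_dir S v -> u != 0 -> exists c, v = c *: u.

Lemma flat_dirB S x y : flat S x -> flat S y -> flat_dir S (y - x).
Proof. by move=> Sx Sy i iS; rewrite dotvBr Sx // Sy // subrr. Qed.

Lemma flat_dirZ S (c : R) u : flat_dir S u -> flat_dir S (c *: u).
Proof. by move=> Su i iS; rewrite dotvZr Su // mulr0. Qed.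

Lemma flat_dir_setD1 S i u :
  flat_dir (S :\ i) u -> dotv (a i) u = 0 -> flat_dir S u.
Proof.
by move=> Su ui j jS; case: (eqVneq j i) => [-> //|ji]; rewrite Su // !inE ji.
Qed.

Lemma flat_dir_point S p :
  flat S p -> (forall y, flat S y -> y = p) -> forall u, flat_dir S u -> u = 0.
Proof.
move=> Sp Suniq u Su; have Spu : flat S (p + u).
  by move=> i iS; rewrite /on_hyperplane dotvDr Su // addr0 Sp.
by rewrite -(addKr p u) (Suniq _ Spu) addNr.
Qed.

Lemma flat_dim_le1_setD1 S i :
  (forall u, flat_dir S u -> u = 0) -> flat_dim_le1 (S :\ i).
Proof.
move=> S_dir0 u v Su Sv u0.
have ai_u : dotv (a i) u != 0.
  by apply: contra u0 => /eqP ui; apply/eqP/S_dir0/(flat_dir_setD1 Su).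
exists (dotv (a i) v / dotv (a i) u); apply/eqP; rewrite -subr_eq0.
apply/eqP/S_dir0/(@flat_dir_setD1 _ i).
  by move=> j jT; rewrite dotvBr dotvZr (Su j) // (Sv j) // mulr0 subrr.
by rewrite dotvBr dotvZr divfK // subrr.
Qed.

Variables (C : set 'rV[R]_d).
Hypothesis convC : convex C.

Definition two_sided_on T p :=
  exists2 w, w != 0 & flat_dir T w /\ two_sided C p w.

Definition line_endpoint T p :=
  [/\ flat_dim_le1 T, flat T p, C p & ~ two_sided_on T p].

Lemma line_endpoint_fiber T (l : seq 'rV[R]_d) :
  uniq l -> {in l, forall x, line_endpoint T x} -> (size l <= 2)%N.
Proof.
case: l => [|x [|y [|z l]]] //= /and4P[]; rewrite !inE.
move=> /norP[xy /norP[xz _]] /norP[yz _] _ _ endpoints.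
have [line_T Tx Cx one_sided_x] := endpoints x (mem_head _ _).
have [_ Ty Cy one_sided_y] : line_endpoint T y.
  by apply: endpoints; rewrite !inE eqxx orbT.
have [_ Tz Cz one_sided_z] : line_endpoint T z.
  by apply: endpoints; rewrite !inE eqxx !orbT.
pose u := y - x.
have u0 : u != 0 by rewrite subr_eq0 eq_sym.
have [rho z_x] := line_T _ _ (flat_dirB Tx Ty) (flat_dirB Tx Tz) u0.
have ey : y = x + u by rewrite /u addrC subrK.
have ez : z = x + rho *: u by rewrite -z_x addrC subrK.
have rho0 : rho != 0.
  by apply: contra xz; rewrite ez => /eqP->; rewrite scale0r addr0.
have rho1 : rho != 1.
  by apply: contra yz; rewrite ez ey => /eqP->; rewrite scale1r.
rewrite ey in Cy one_sided_y; rewrite ez in Cz one_sided_z.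
have [c c0 two_sided_cu] := convex_collinear_two_sided convC Cx Cy Cz rho0 rho1.
have cu0 : c *: u != 0 by rewrite scaler_eq0 negb_or gt_eqF.
have Tcu : flat_dir T (c *: u) := flat_dirZ c (flat_dirB Tx Ty).
exfalso; case: two_sided_cu => ts;
  [apply: one_sided_x | apply: one_sided_y | apply: one_sided_z];
  by exists (c *: u).
Qed.

Lemma flat_point_nbhs S p :
  (0 < #|S|)%N -> flat S p -> (forall y, flat S y -> y = p) ->
  {in S, forall i, two_sided_on (S :\ i) p} -> nbhs p C.
Proof.
move=> S0 Sp Suniq two_sided_S.
have S_dir0 := flat_dir_point Sp Suniq.
have [W HW] : exists W : 'I_n -> 'rV[R]_d, {in S, forall i,
    [/\ W i != 0, flat_dir (S :\ i) (W i) & two_sided C p (W i)]}.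
  suff /choice[W HW] : forall i, exists w, i \in S ->
      [/\ w != 0, flat_dir (S :\ i) w & two_sided C p w] by exists W.
  move=> i; have [/two_sided_S[w w0 [Sw tsw]]|_] := boolP (i \in S).
    by exists w.
  by exists 0.
pose lam i := dotv (a i) (W i).
have lam0 : {in S, forall i, lam i != 0}.
  move=> i iS; have [W0 SW _] := HW i iS.
  by apply: contra W0 => /eqP li; apply/eqP/S_dir0/(flat_dir_setD1 SW).
pose e i := (lam i)^-1 *: a i.
apply: (convex_nbhs_of_two_sided convC (W := W) (c := fun i => dotv (e i))
  (M := fun i => \sum_k `|e i ord0 k|) S0).
- by move=> i /HW[].
- by move=> i; apply: sumr_ge0.
- by move=> i v; apply: dotv_bound.
move=> v; apply/eqP; rewrite -subr_eq0; apply/eqP/S_dir0 => j jS.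
rewrite dotvBr dotv_sumr (bigD1 j) //= big1 => [|i /andP[iS ij]].
  by rewrite addr0 dotvZr dotvZl mulrAC mulVf ?lam0 // mul1r subrr.
have [_ SW _] := HW i iS.
by rewrite dotvZr SW ?mulr0 // !inE jS andbT eq_sym.
Qed.

Lemma bdry_flat_point_endpoint S p :
  closed C -> (0 < #|S|)%N -> flat S p -> (forall y, flat S y -> y = p) ->
  bdry C p -> exists2 i, i \in S & line_endpoint (S :\ i) p.
Proof.
move=> clC S0 Sp Suniq [clCp not_interior].
have Cp : C p by move: clCp; rewrite -(closure_id C).1.
have line_S i : flat_dim_le1 (S :\ i).
  exact: flat_dim_le1_setD1 (flat_dir_point Sp Suniq).
apply: contrapT => no_endpoint; apply: not_interior.
apply: (flat_point_nbhs S0 Sp Suniq) => i iS.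
apply: contrapT => not_two_sided; apply: no_endpoint; exists i => //; split=> //.
by move=> j /setD1P[_ jS]; apply: Sp.
Qed.

End HyperplaneArrangement.

Theorem lemma8 (R : realType) (n d : nat) (P : set 'rV[R]_d) :
  (1 <= d)%N -> (d <= n)%N -> grid_set n P ->
  forall C : set 'rV[R]_d, compact C -> convex C ->
  forall s : seq 'rV[R]_d, uniq s ->
    (forall x, x \in s -> (bdry C `&` P) x) ->
    (size s <= 2 * 'C(n, d.-1))%N.
Proof.
move=> d_gt0 _ [a [b [_ unique_point _ ->]]] C compactC convC s uniq_s s_bdry.
have closedC : closed C := compact_closed (@norm_hausdorff _ _) compactC.
pose labels := [set T : {set 'I_n} | #|T| == d.-1]%SET.
pose labelled p T := T \in labels /\ line_endpoint a b C T p.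
have endpoint p : p \in s -> exists T, labelled p T.
  case/s_bdry => bdry_p [S [cardS Sp]].
  have [x0 [_ x0_uniq]] := unique_point S cardS.
  have Suniq y : flat a b S y -> y = p.
    by move=> Sy; rewrite -(x0_uniq y Sy) (x0_uniq p Sp).
  have S0 : (0 < #|S|)%N by rewrite cardS.
  have [i iS endpoint_i] :=
    bdry_flat_point_endpoint convC closedC S0 Sp Suniq bdry_p.
  by exists (S :\ i); split=> //; rewrite inE -cardS (cardsD1 i S) iS.
have /choice[f f_labelled] : forall p, exists T, p \in s -> labelled p T.
  move=> p; have [/endpoint[T pT]|_] := boolP (p \in s); first by exists T.
  by exists [set: 'I_n]%SET.
rewrite -[n]card_ord -card_draws.
apply: (size_le_fibers (f := f)) => [p /f_labelled[] //|T].
have fiber_T : {in [seq x <- s | f x == T], forall x, line_endpoint a b C T x}.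
  by move=> x; rewrite mem_filter => /andP[/eqP <- /f_labelled[]].
by rewrite -size_filter
  (line_endpoint_fiber convC (filter_uniq _ uniq_s) fiber_T).
Qed.
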